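(* Let $m,n$ be positive integers with $n \geq m$, and let $G = K_m \otimes K_n$. Then: (1) If $m=n=2$, then $G$ is disconnected. (2) If $m \geq 3$ and $n \leq 2m-2$, then $\dim(G) = \left\lceil \frac{2}{3}(m+n-2) \right\rceil$. (3) If $m \geq 2$ and $n \geq 2m-1$, then $\dim(G) = n-1$.
   Context: $K_r$ denotes the complete graph (clique) on $r$ vertices. The tensor product $G \otimes H$ of simple graphs $G,H$ has vertex set $V(G)\times V(H)$, with $(u,v)$ adjacent to $(x,y)$ if and only if $ux \in E(G)$ and $vy \in E(H)$. For a connected graph $G$ with distance function $d$, and an ordered set $W=\{w_1,\dots,w_k\}\subseteq V(G)$, the metric representation of a vertex $v$ is $r(v\mid W)=(d(v,w_1),\dots,d(v,w_k))$. $W$ is a resolving set if distinct vertices have distinct representations; the metric dimension $\dim(G)$ is the minimum cardinality of a resolving set. *)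

From mathcomp Require Import all_boot.
Set Implicit Arguments. Unset Strict Implicit. Unset Printing Implicit Defensive.

Definition complete_graph (r : nat) : rel 'I_r := fun i j => i != j.

Arguments complete_graph r : clear implicits.

Definition tensor_graph (T U : finType) (eG : rel T) (eH : rel U) : rel (T * U) :=
  fun p q => eG p.1 q.1 && eH p.2 q.2.

Section Metric.
Variables (T : finType) (e : rel T).

Definition connected_graph : Prop := forall x y : T, connect e x y.

Fixpoint within (k : nat) (x y : T) : bool :=
  match k with
  | 0 => x == y
  | k'.+1 => within k' x y || [exists z, within k' x z && e z y]
  end.

(* Graph distance: least k with a walk of length <= k from x to y.
   (In a connected graph this is < #|T|; for unreachable pairs the value is
   the conventional #|T|, irrelevant for connected graphs.) *)
Definition dist (x y : T) : nat := find (fun k => within k x y) (iota 0 #|T|).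

Definition resolving (W : {set T}) : bool :=
  [forall u, forall v, [forall w in W, dist u w == dist v w] ==> (u == v)].

(* Metric dimension: minimum cardinality of a resolving set
   (setT is always resolving, so the search below finds the true minimum). *)
Definition metric_dim : nat :=
  find (fun k => [exists W : {set T}, resolving W && (#|W| == k)]) (iota 0 #|T|.+1).
End Metric.

From mathcomp Require Import all_boot zify perm.
Set Implicit Arguments. Unset Strict Implicit. Unset Printing Implicit Defensive.

(* In K_m (x) K_n two vertices are adjacent iff they are not collinear (share neither
   row nor column), and for m, n >= 3 distinct collinear vertices are at distance 2.
   A set W of landmarks resolves as soon as it meets all rows but one and all columns
   but one, and every landmark has a collinear partner in W.  Conversely a resolving W
   meets all rows but one and all columns but one (swapping two unmet lines is an
   automorphism fixing W), and for m, n >= 3 it has at most two defects among an unmet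
   row, an unmet column and an isolated landmark, alone on its row and its column.
   A met line carries two landmarks unless its landmark is alone on it, so counting
   landmarks line by line gives 3|W| >= 2(m + n - 2); disjoint collinear pairs, with
   a pendant point when needed, attain this bound.  When n >= 2m - 1 the column
   condition alone forces |W| >= n - 1.  K_2 (x) K_2 is two disjoint edges. *)

Lemma find_iota_least (P : pred nat) N k :
  k < N -> P k -> (forall j, j < k -> ~~ P j) -> find P (iota 0 N) = k.
Proof.
move=> ltkN Pk minP; apply/eqP; rewrite eqn_leq; apply/andP; split.
  by rewrite leqNgt; apply/negP => /(before_find 0); rewrite nth_iota // Pk.
have hasP : has P (iota 0 N) by apply/hasP; exists k; rewrite ?mem_iota.
have ltfN : find P (iota 0 N) < N by rewrite -[X in _ < X](size_iota 0) -has_find.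
by rewrite leqNgt; apply/negP => /minP; have := nth_find 0 hasP; rewrite nth_iota // => ->.
Qed.

Lemma exists_superset_card (T : finType) (A : {set T}) k :
  #|A| <= k <= #|T| -> exists2 B : {set T}, A \subset B & #|B| = k.
Proof.
elim: k => [|k IH] /andP[leAk lekT]; first by exists A => //; apply/eqP; rewrite -leqn0.
have [eqAk|leAk'] : #|A| = k.+1 \/ #|A| <= k by lia.
  by exists A.
have [B sAB cardB] := IH ltac:(lia).
have : 0 < #|~: B| by move: (cardsC B); lia.
case/card_gt0P => x; rewrite inE => xNB.
exists (x |: B); first exact: subset_trans sAB (subsetUr _ _).
by rewrite cardsU1 xNB cardB.
Qed.

Lemma mem2_of_card_setC_le1 (T : finType) (A : {set T}) x y :
  #|~: A| <= 1 -> x != y -> (x \in A) || (y \in A).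
Proof.
move=> /card_le1_eqP le1 neq_xy; apply/negPn/negP; rewrite negb_or => /andP[xNA yNA].
by move/eqP: neq_xy; apply; apply: le1; rewrite inE.
Qed.

Lemma card_setC_le1_ord m (A : {set 'I_m.+1}) :
  (forall i : 'I_m.+1, i < m -> i \in A) -> #|~: A| <= 1.
Proof.
move=> lowA; have top (i : 'I_m.+1) : i \notin A -> val i = m.
  by move=> iNA; apply/eqP; rewrite eqn_leq -ltnS ltn_ord leqNgt; apply: contra iNA => /lowA.
by apply/card_le1_eqP => i i'; rewrite !inE => /top ti /top ti'; apply: val_inj; rewrite ti ti'.
Qed.

Lemma exists_ord_neq2 k (i j : 'I_k) : 2 < k -> exists l : 'I_k, (l != i) && (l != j).
Proof.
move=> k_gt2; have : 0 < #|~: [set i; j]|.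
  by move: (cardsC [set i; j]) (cards2 i j); rewrite card_ord; case: (i != j) => /=; lia.
by case/card_gt0P => l; rewrite !inE negb_or; exists l.
Qed.

Section Lonely.
Variables (T I : finType) (f : T -> I) (S : {set T}).

Definition lonely := [set x in S | #|[set y in S | f y == f x]| == 1].

Lemma lonelyP x y : x \in lonely -> y \in S -> f y = f x -> y = x.
Proof.
rewrite inE => /andP[xS /cards1P[z fiber_x]] yS fyx.
have: x \in [set z] by rewrite -fiber_x inE xS eqxx.
have: y \in [set z] by rewrite -fiber_x inE yS fyx eqxx.
by rewrite !inE => /eqP-> /eqP->.
Qed.

Lemma lonely_sub : lonely \subset S.
Proof. by apply/subsetP => x; rewrite inE => /andP[]. Qed.

Lemma card_imset_lonely : 2 * #|f @: S| <= #|S| + #|lonely|.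
Proof.
have sum_fibers (A : {set T}) : #|A| = \sum_i #|[set x in A | f x == i]|.
  rewrite -sum1_card (partition_big f predT) //=; apply: eq_bigr => i _.
  by rewrite -sum1_card; apply: eq_bigl => x; rewrite !inE.
have -> : #|f @: S| = \sum_i (0 < #|[set x in S | f x == i]|).
  rewrite -sum1_card big_mkcond /=; apply: eq_bigr => i _.
  have -> : (0 < #|[set x in S | f x == i]|) = (i \in f @: S).
    apply/card_gt0P/imsetP => [[x]|[x xS ->]]; last by exists x; rewrite !inE xS /=.
    by rewrite !inE => /andP[xS /eqP <-]; exists x.
  by case: (i \in _).
(* Fiberwise, a fiber of size k contributes 2 [k > 0] <= k + [k == 1]. *)
rewrite !sum_fibers big_distrr -big_split /=; apply: leq_sum => i _.
have lonely_fiber : #|[set x in lonely | f x == i]|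
    = (#|[set x in S | f x == i]| == 1) * #|[set x in S | f x == i]|.
  case: eqP => [fiber1|fiberN1]; rewrite ?mul1n ?mul0n.
    apply: eq_card => x; rewrite !inE.
    by case: (f x =P i) => [->|]; rewrite ?fiber1 ?eqxx ?andbT ?andbF.
  apply: eq_card0 => x; rewrite !inE; case: (f x =P i) => [->|]; rewrite ?andbF //.
  by move/eqP/negbTE: fiberN1 => ->; rewrite andbF.
by rewrite lonely_fiber; case: #|_| => [|[|k]].
Qed.
End Lonely.

Section GraphDistance.
Variables (T : finType) (e : rel T).
Implicit Types (x y z : T) (W : {set T}).

Lemma within_refl k x : within e k x x.
Proof. by elim: k => [|k IH] //=; rewrite IH. Qed.

Lemma within_leq k l x y : k <= l -> within e k x y -> within e l x y.
Proof. by move=> /subnK <-; elim: (l - k) => [|d IH] //= /IH ->. Qed.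

Lemma within_step k x z y : within e k x z -> e z y -> within e k.+1 x y.
Proof. by move=> wxz ezy /=; apply/orP; right; apply/existsP; exists z; rewrite wxz. Qed.

Lemma within1E x y : within e 1 x y = (x == y) || e x y.
Proof.
rewrite /=; have [-> //|_] := eqVneq x y.
by apply/existsP/idP => [[z /andP[/eqP -> //]]|exy]; exists x; rewrite eqxx.
Qed.

Lemma dist_leq k x y : within e k x y -> dist e x y <= k.
Proof.
move=> wk; rewrite /dist; have [ltkT|] := ltnP k #|T|.
  by rewrite leqNgt; apply/negP => /(before_find 0); rewrite nth_iota // add0n wk.
by apply: leq_trans; rewrite -[X in _ <= X](size_iota 0) find_size.
Qed.

Lemma dist_gtn k x y : k < #|T| -> ~~ within e k x y -> k < dist e x y.
Proof.
move=> ltkT; apply: contraNT; rewrite -leqNgt /dist => le_dk.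
have hasw : has (fun j => within e j x y) (iota 0 #|T|).
  by rewrite has_find size_iota (leq_ltn_trans le_dk).
have ltdT : dist e x y < #|T| by rewrite -[X in _ < X](size_iota 0) -has_find.
by apply: within_leq le_dk _; have := nth_find 0 hasw; rewrite nth_iota.
Qed.

Lemma dist_eq0 x y : (dist e x y == 0) = (x == y).
Proof.
apply/idP/idP => [|/eqP <-]; last by rewrite -leqn0; apply: dist_leq (within_refl 0 x).
apply: contraLR => neq_xy; rewrite -lt0n dist_gtn //.
by apply/card_gt0P; exists x.
Qed.

Lemma card_gt1_of_neq x y : x != y -> 1 < #|T|.
Proof. by move=> neq_xy; apply/card_gt1P; exists x, y. Qed.

Lemma dist_eq1 x y : (dist e x y == 1) = (x != y) && e x y.
Proof.
have [<-|neq_xy] /= := eqVneq x y; first by have := dist_eq0 x x; rewrite eqxx => /eqP ->.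
have gt1T := card_gt1_of_neq neq_xy.
have gt0d : 0 < dist e x y by rewrite dist_gtn ?(ltnW gt1T) //= neq_xy.
case exy: (e x y).
  by rewrite eqn_leq gt0d dist_leq // within1E exy orbT.
by rewrite gtn_eqF // dist_gtn // within1E exy (negbTE neq_xy).
Qed.

Lemma dist_eq2 x z y : x != y -> ~~ e x y -> e x z -> e z y -> dist e x y = 2.
Proof.
move=> neq_xy nexy exz ezy; apply/eqP; rewrite eqn_leq.
have -> : 1 < dist e x y.
  by rewrite dist_gtn ?(card_gt1_of_neq neq_xy) // within1E (negbTE neq_xy).
by rewrite dist_leq // (within_step _ ezy) // (within_step (within_refl 0 x)).
Qed.

Lemma resolvingP W :
  reflect (forall u v, {in W, forall w, dist e u w = dist e v w} -> u = v) (resolving e W).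
Proof.
apply: (iffP forallP) => [resW u v duv|resW u].
  by apply/eqP; move/forallP/(_ v)/implyP: (resW u); apply; apply/forall_inP => w /duv ->.
by apply/forallP => v; apply/implyP => /forall_inP duv; apply/eqP/resW => w /duv/eqP.
Qed.

Lemma resolvingS W W' : W \subset W' -> resolving e W -> resolving e W'.
Proof.
move=> /subsetP sWW' /resolvingP resW; apply/resolvingP => u v duv.
by apply: resW => w /sWW'; apply: duv.
Qed.

Lemma resolving_of_separating W :
  (forall u v, u != v -> u \notin W -> v \notin W -> exists2 w, w \in W & e u w != e v w) ->
  resolving e W.
Proof.
move=> sepW; apply/resolvingP => u v duv.
have eq_of_dist x y : dist e y x = dist e x x -> y = x.
  by move=> dyx; apply/eqP; rewrite -dist_eq0 dyx dist_eq0.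
have [uW|uNW] := boolP (u \in W); first by rewrite (eq_of_dist _ _ (esym (duv _ uW))).
have [vW|vNW] := boolP (v \in W); first by rewrite (eq_of_dist _ _ (duv _ vW)).
apply/eqP; apply: contraT => neq_uv; have [w wW] := sepW _ _ neq_uv uNW vNW.
have neq_uw : u != w by apply: contraNneq uNW => ->.
have neq_vw : v != w by apply: contraNneq vNW => ->.
by rewrite -[e u w](andTb) -neq_uw -dist_eq1 duv // dist_eq1 neq_vw eqxx.
Qed.

Lemma within_morph (f : T -> T) : injective f -> (forall x y, e (f x) (f y) = e x y) ->
  forall k x y, within e k (f x) (f y) = within e k x y.
Proof.
move=> injf ef; elim=> [|k IH] x y /=; first by rewrite inj_eq.
rewrite IH; congr (_ || _); apply/existsP/existsP => [[z]|[z]].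
  by rewrite -(f_invF injf z) IH ef => ?; exists (invF injf z).
by exists (f z); rewrite IH ef.
Qed.

Lemma morph_not_resolving (f : T -> T) W u :
  injective f -> (forall x y, e (f x) (f y) = e x y) ->
  {in W, forall w, f w = w} -> f u != u -> ~~ resolving e W.
Proof.
move=> injf ef fixW; apply: contra => /resolvingP resW; apply/eqP/resW => w wW.
by rewrite -{1}(fixW w wW) /dist; apply: eq_find => k; rewrite within_morph.
Qed.

Lemma metric_dim_eq k :
  k <= #|T| -> (exists2 W, resolving e W & #|W| <= k) ->
  (forall W, resolving e W -> k <= #|W|) -> metric_dim e = k.
Proof.
move=> lekT [W resW leWk] minW; apply: find_iota_least => [|| j ltjk]; first by [].
  have [B sWB <-] := exists_superset_card (A := W) (k := k) ltac:(lia).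
  by apply/existsP; exists B; rewrite (resolvingS sWB resW) eqxx.
by apply/existsP => -[B /andP[/minW lekB /eqP cardB]]; lia.
Qed.

End GraphDistance.

Notation G m n := (tensor_graph (complete_graph m) (complete_graph n)).

Section TensorCliques.
Variables m n : nat.
Implicit Types (p q w : 'I_m * 'I_n) (W : {set 'I_m * 'I_n}).

Definition collinear p q := (p.1 == q.1) || (p.2 == q.2).

Lemma tensor_cliqueE p q : G m n p q = ~~ collinear p q.
Proof. by rewrite /tensor_graph /complete_graph negb_or. Qed.

Ltac coords := rewrite /collinear /= ?inE ?xpair_eqE;
  repeat match goal with |- context [?x == ?y] => case: (x =P y) => [?|?]; subst end;
  rewrite /= ?eqxx //=; try congruence.

Lemma collinear_row_pair (a x : 'I_m) (b d y : 'I_n) : b != d -> y \in [:: b; d] ->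
  collinear (a, b) (x, y) && collinear (a, d) (x, y) -> (x, y) \in [:: (a, b); (a, d)].
Proof. move=> /eqP; coords. Qed.

Lemma collinear_col_pair (a c x : 'I_m) (b y : 'I_n) : a != c -> x \in [:: a; c] ->
  collinear (a, b) (x, y) && collinear (c, b) (x, y) -> (x, y) \in [:: (a, b); (c, b)].
Proof. move=> /eqP; coords. Qed.

Lemma collinear_cross (a c x : 'I_m) (b d y : 'I_n) : a != c -> b != d ->
  collinear (a, b) (x, y) && collinear (c, d) (x, y) -> (x, y) \in [:: (a, d); (c, b)].
Proof. move=> /eqP ? /eqP ?; coords. Qed.

Lemma blind_same_row W (a : 'I_m) (b d : 'I_n) : b != d -> #|~: (snd @: W)| <= 1 ->
  {in W, forall w, collinear (a, b) w = collinear (a, d) w} -> ((a, b) \in W) || ((a, d) \in W).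
Proof.
move=> neq_bd colsW blind.
have [[x y] wW /= ybd] : exists2 w, w \in W & w.2 \in [:: b; d].
  case/orP: (mem2_of_card_setC_le1 colsW neq_bd) => /imsetP[w wW ->];
    by exists w; rewrite ?inE ?eqxx ?orbT.
have colw : collinear (a, b) (x, y) || collinear (a, d) (x, y) by move: ybd; coords.
have : collinear (a, b) (x, y) && collinear (a, d) (x, y).
  by move: colw; rewrite -(blind _ wW) orbb andbb.
by move/(collinear_row_pair neq_bd ybd); rewrite !inE => /orP[]/eqP<-; rewrite wW ?orbT.
Qed.

Lemma blind_same_col W (a c : 'I_m) (b : 'I_n) : a != c -> #|~: (fst @: W)| <= 1 ->
  {in W, forall w, collinear (a, b) w = collinear (c, b) w} -> ((a, b) \in W) || ((c, b) \in W).
Proof.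
move=> neq_ac rowsW blind.
have [[x y] wW /= xac] : exists2 w, w \in W & w.1 \in [:: a; c].
  case/orP: (mem2_of_card_setC_le1 rowsW neq_ac) => /imsetP[w wW ->];
    by exists w; rewrite ?inE ?eqxx ?orbT.
have colw : collinear (a, b) (x, y) || collinear (c, b) (x, y) by move: xac; coords.
have : collinear (a, b) (x, y) && collinear (c, b) (x, y).
  by move: colw; rewrite -(blind _ wW) orbb andbb.
by move/(collinear_col_pair neq_ac xac); rewrite !inE => /orP[]/eqP<-; rewrite wW ?orbT.
Qed.

Lemma blind_cross W (a c : 'I_m) (b d : 'I_n) : a != c -> b != d -> #|~: (fst @: W)| <= 1 ->
  {in W, forall w, exists2 w', w' \in W & (w' != w) && collinear w' w} ->
  ~ {in W, forall w, collinear (a, b) w = collinear (c, d) w}.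
Proof.
move=> neq_ac neq_bd rowsW pairW blind.
(* A landmark on row a or c must be (a, d) or (c, b), and so must its partner;
   but these two points are not collinear. *)
have cross w : w \in W -> collinear (a, b) w || collinear (c, d) w -> w \in [:: (a, d); (c, b)].
  move=> wW; rewrite -(blind _ wW) orbb => colw.
  by case: w wW colw => x y wW colw; apply: collinear_cross; rewrite // -(blind _ wW) andbb.
have [w wW wcross] : exists2 w, w \in W & w \in [:: (a, d); (c, b)].
  case/orP: (mem2_of_card_setC_le1 rowsW neq_ac) => /imsetP[w wW eqx]; exists w => //;
    by apply: (cross _ wW); move: eqx; case: w {wW} => x y /= ->; coords.
have [w' w'W /andP[neq_w'w colw'w]] := pairW _ wW.
have w'cross : w' \in [:: (a, d); (c, b)].
  apply: (cross _ w'W); move: wcross colw'w; rewrite !inE /collinear /=.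
  by case/orP=> /eqP-> /= /orP[]/eqP->; rewrite eqxx ?orbT.
move: wcross w'cross neq_w'w colw'w; rewrite !inE => /orP[]/eqP-> /orP[]/eqP-> //.
all: by move: neq_ac neq_bd; coords.
Qed.

Lemma resolving_of_lines W :
  #|~: (fst @: W)| <= 1 -> #|~: (snd @: W)| <= 1 ->
  {in W, forall w, exists2 w', w' \in W & (w' != w) && collinear w' w} ->
  resolving (G m n) W.
Proof.
move=> rowsW colsW pairW; apply: resolving_of_separating => -[a b] [c d] neq_uv uNW vNW.
apply/exists_inP; apply: contraT; rewrite negb_exists_in => /forall_inP sameW.
have blind w : w \in W -> collinear (a, b) w = collinear (c, d) w.
  by move=> /sameW; rewrite negbK !tensor_cliqueE => /eqP/negb_inj.
have uvNW : ((a, b) \in W) || ((c, d) \in W) = false by apply/norP.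
have [eq_ac|neq_ac] := eqVneq a c.
  subst c; have neq_bd : b != d by apply: contraNneq neq_uv => ->.
  by rewrite (blind_same_row neq_bd colsW blind) in uvNW.
have [eq_bd|neq_bd] := eqVneq b d.
  by subst d; rewrite (blind_same_col neq_ac rowsW blind) in uvNW.
by case: (blind_cross neq_ac neq_bd rowsW pairW blind).
Qed.

Lemma resolving_rows W : 0 < n -> resolving (G m n) W -> #|~: (fst @: W)| <= 1.
Proof.
move=> n_gt0 resW; apply/card_le1_eqP => i i'; rewrite !inE => iNW i'NW.
apply/eqP; apply: contraT => neq_ii'; pose j := Ordinal n_gt0.
suff: ~~ resolving (G m n) W by rewrite resW.
apply: (morph_not_resolving (f := fun p => (tperm i i' p.1, p.2)) (u := (i, j))).
- by move=> [x y] [x' y'] [/perm_inj -> ->].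
- by move=> p q; rewrite /tensor_graph /complete_graph /= (inj_eq perm_inj).
- move=> [x y] wW /=; rewrite tpermD //.
    by apply: contraNneq iNW => ->; apply/imsetP; exists (x, y).
  by apply: contraNneq i'NW => ->; apply/imsetP; exists (x, y).
- by rewrite /= tpermL xpair_eqE eqxx andbT.
Qed.

Lemma resolving_cols W : 0 < m -> resolving (G m n) W -> #|~: (snd @: W)| <= 1.
Proof.
move=> m_gt0 resW; apply/card_le1_eqP => j j'; rewrite !inE => jNW j'NW.
apply/eqP; apply: contraT => neq_jj'; pose i := Ordinal m_gt0.
suff: ~~ resolving (G m n) W by rewrite resW.
apply: (morph_not_resolving (f := fun p => (p.1, tperm j j' p.2)) (u := (i, j))).
- by move=> [x y] [x' y'] [-> /perm_inj ->].
- by move=> p q; rewrite /tensor_graph /complete_graph /= (inj_eq perm_inj).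
- move=> [x y] wW /=; rewrite tpermD //.
    by apply: contraNneq jNW => ->; apply/imsetP; exists (x, y).
  by apply: contraNneq j'NW => ->; apply/imsetP; exists (x, y).
- by rewrite /= tpermL xpair_eqE eqxx.
Qed.

Section ThreeByThree.
Hypotheses (m_gt2 : 2 < m) (n_gt2 : 2 < n).

Lemma dist_tensor_clique p q :
  dist (G m n) p q = if ~~ collinear p q then 1 else if p == q then 0 else 2.
Proof.
have [ncolpq|colpq] /= := boolP (~~ collinear p q).
  apply/eqP; rewrite dist_eq1 tensor_cliqueE ncolpq andbT.
  by apply: contraNneq ncolpq => ->; rewrite /collinear eqxx.
have [<-|neq_pq] := eqVneq p q; first by apply/eqP; rewrite dist_eq0.
have [i /andP[ip iq]] := exists_ord_neq2 p.1 q.1 m_gt2.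
have [j /andP[jp jq]] := exists_ord_neq2 p.2 q.2 n_gt2.
apply: (dist_eq2 (z := (i, j))); rewrite ?tensor_cliqueE ?colpq // /collinear negb_or /=.
  by rewrite eq_sym ip eq_sym jp.
by rewrite iq jq.
Qed.

Lemma cross_not_resolving W (a c : 'I_m) (b d : 'I_n) : a != c -> b != d ->
  {in W, forall w, collinear (a, b) w || collinear (c, d) w -> w \in [:: (a, d); (c, b)]} ->
  ~~ resolving (G m n) W.
Proof.
move=> neq_ac neq_bd crossW; apply/negP => /resolvingP resW.
suff [eq_ac _] : (a, b) = (c, d) by rewrite eq_ac eqxx in neq_ac.
apply: resW => w wW; rewrite !dist_tensor_clique.
have [/(crossW _ wW)|] := boolP (collinear (a, b) w || collinear (c, d) w).
  by rewrite !inE => /orP[]/eqP->; move: neq_ac neq_bd; coords.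
by rewrite negb_or => /andP[-> ->].
Qed.

Definition isolated W := lonely fst W :&: lonely snd W.

Lemma isolatedP W w : w \in isolated W -> w \in W /\ {in W, forall w', collinear w w' -> w' = w}.
Proof.
rewrite inE => /andP[wfst wsnd]; split; first exact: (subsetP (lonely_sub _ _)) wfst.
move=> w' w'W /orP[]/eqP eqw; [exact: lonelyP wfst w'W _ | exact: lonelyP wsnd w'W _].
Qed.

Lemma card_isolated_le1 W : resolving (G m n) W -> #|isolated W| <= 1.
Proof.
move=> resW; apply/card_le1_eqP => -[a d] [c b] /isolatedP[adW ad1] /isolatedP[cbW cb1].
apply/eqP; apply: contraT => neq.
have neq_ac : a != c.
  by apply: contraNneq neq => eq_ac; rewrite (cb1 _ adW) // /collinear eq_ac eqxx.
have neq_bd : b != d.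
  by apply: contraNneq neq => eq_bd; rewrite (cb1 _ adW) // /collinear eq_bd eqxx orbT.
suff: ~~ resolving (G m n) W by rewrite resW.
apply: (cross_not_resolving neq_ac neq_bd) => -[x y] wW.
rewrite /collinear /= => /orP[]/orP[]/eqP eqxy;
  [rewrite (ad1 _ wW) | rewrite (cb1 _ wW) | rewrite (cb1 _ wW) | rewrite (ad1 _ wW)];
  by rewrite ?inE ?eqxx ?orbT // /collinear /= eqxy eqxx ?orbT.
Qed.

Lemma isolated_missing_lines W w c b : w \in isolated W ->
  c \notin fst @: W -> b \notin snd @: W -> ~~ resolving (G m n) W.
Proof.
case: w => a d /isolatedP[adW ad1] cNW bNW.
have neq_ac : a != c by apply: contraNneq cNW => <-; apply/imsetP; exists (a, d).
have neq_bd : b != d by apply: contraNneq bNW => ->; apply/imsetP; exists (a, d).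
apply: (cross_not_resolving neq_ac neq_bd) => -[x y] wW.
rewrite /collinear /= => /orP[]/orP[]/eqP eqxy.
- by rewrite (ad1 _ wW) ?inE ?eqxx // /collinear /= eqxy eqxx.
- by case/negP: bNW; apply/imsetP; exists (x, y).
- by case/negP: cNW; apply/imsetP; exists (x, y).
- by rewrite (ad1 _ wW) ?inE ?eqxx // /collinear /= eqxy eqxx orbT.
Qed.

Lemma card_missing_isolated W : resolving (G m n) W ->
  #|~: (fst @: W)| + #|~: (snd @: W)| + #|isolated W| <= 2.
Proof.
move=> resW.
have rowsW := resolving_rows (ltnW (ltnW n_gt2)) resW.
have colsW := resolving_cols (ltnW (ltnW m_gt2)) resW.
have [iso0|/card_gt0P[w wiso]] := posnP #|isolated W|; first lia.
have := card_isolated_le1 resW.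
suff : (#|~: (fst @: W)| == 0) || (#|~: (snd @: W)| == 0) by case/orP=> /eqP; lia.
apply: contraT; rewrite negb_or -!lt0n => /andP[].
case/card_gt0P => c; rewrite inE => cNW; case/card_gt0P => b; rewrite inE => bNW.
by rewrite (negbTE (isolated_missing_lines wiso cNW bNW)) in resW.
Qed.

Lemma resolving_card_lb W : resolving (G m n) W -> 2 * (m + n - 2) <= 3 * #|W|.
Proof.
move=> resW.
have defects := card_missing_isolated resW.
have rows : 2 * #|fst @: W| <= #|W| + #|lonely fst W| := card_imset_lonely fst W.
have cols : 2 * #|snd @: W| <= #|W| + #|lonely snd W| := card_imset_lonely snd W.
have lonely_rows_cols : #|lonely fst W| + #|lonely snd W| <= #|W| + #|isolated W|.
  by rewrite -cardsUI leq_add2r subset_leq_card // subUset !lonely_sub.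
have card_rows : #|fst @: W| + #|~: (fst @: W)| = m by rewrite cardsC card_ord.
have card_cols : #|snd @: W| + #|~: (snd @: W)| = n by rewrite cardsC card_ord.
lia.
Qed.

End ThreeByThree.

End TensorCliques.

Lemma resolving_of_enum m n k (f : nat -> nat * nat) : 0 < m -> 0 < n ->
  (forall t, t < k -> (f t).1 < m /\ (f t).2 < n) ->
  (forall i, i < m.-1 -> exists2 t, t < k & (f t).1 = i) ->
  (forall j, j < n.-1 -> exists2 t, t < k & (f t).2 = j) ->
  (forall t, t < k -> exists2 t', t' < k &
     (f t').1 = (f t).1 /\ (f t').2 <> (f t).2 \/ (f t').2 = (f t).2 /\ (f t').1 <> (f t).1) ->
  exists2 W : {set 'I_m * 'I_n}, resolving (G m n) W & #|W| <= k.
Proof.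
case: m => // m _; case: n => // n _ fbound frows fcols fpartner.
pose g (t : 'I_k) : 'I_m.+1 * 'I_n.+1 := (inord (f t).1, inord (f t).2).
have g1 t : val (g t).1 = (f t).1 by rewrite /= inordK //; case: (fbound _ (ltn_ord t)).
have g2 t : val (g t).2 = (f t).2 by rewrite /= inordK //; case: (fbound _ (ltn_ord t)).
exists (g @: setT); last by rewrite (leq_trans (leq_imset_card _ _)) // cardsT card_ord.
apply: resolving_of_lines.
- apply: card_setC_le1_ord => i /frows[t ltk ft]; apply/imsetP.
  by exists (g (Ordinal ltk)); [exact: imset_f | apply: val_inj; rewrite g1].
- apply: card_setC_le1_ord => j /fcols[t ltk ft]; apply/imsetP.
  by exists (g (Ordinal ltk)); [exact: imset_f | apply: val_inj; rewrite g2].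
- move=> _ /imsetP[t _ ->]; have [t' ltk' partner] := fpartner _ (ltn_ord t).
  exists (g (Ordinal ltk')); first exact: imset_f.
  apply/andP; split.
    apply/eqP => eqg; have e1 : val (g (Ordinal ltk')).1 = val (g t).1 by rewrite eqg.
    have e2 : val (g (Ordinal ltk')).2 = val (g t).2 by rewrite eqg.
    by move: e1 e2; rewrite !g1 !g2 /=; case: partner; lia.
  by rewrite /collinear -!val_eqE !g1 !g2 /=; case: partner => -[-> _]; rewrite eqxx ?orbT.
Qed.

(* Points t < 2h form h pairs (i, 2i), (i, 2i+1) on rows i < h; the next 2v form
   v pairs on columns 2h, ..., 2h+v-1 and rows h, ..., h+2v-1; every later point
   takes the next free column on the last occupied row h+2v-1, so it is collinear
   with its predecessor. *)
Definition pair_layout h v t : nat * nat :=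
  if t < 2 * h then (t %/ 2, t)
  else if t < 2 * (h + v) then (h + (t - 2 * h), 2 * h + (t - 2 * h) %/ 2)
  else (h + 2 * v - 1, 2 * h + v + (t - 2 * (h + v))).

Lemma pair_layout_resolving m n h v p : 0 < h + v ->
  m.-1 <= h + 2 * v <= m -> n.-1 <= 2 * h + v + p <= n ->
  exists2 W : {set 'I_m * 'I_n}, resolving (G m n) W & #|W| <= 2 * (h + v) + p.
Proof.
move=> hv_gt0 rows cols.
apply: (@resolving_of_enum _ _ _ (pair_layout h v)); rewrite /pair_layout.
- lia.
- lia.
- by move=> t ltk; do 2?case: ifP => ? /=; lia.
- move=> i lt_im; have [lt_ih|le_hi] := ltnP i h.
    by exists (2 * i); do 2?case: ifP => ? /=; lia.
  by exists (2 * h + (i - h)); do 2?case: ifP => ? /=; lia.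
- move=> j lt_jn; have [lt_jh|le_hj] := ltnP j (2 * h).
    by exists j; do 2?case: ifP => ? /=; lia.
  have [lt_jv|le_vj] := ltnP j (2 * h + v).
    by exists (2 * h + 2 * (j - 2 * h)); do 2?case: ifP => ? /=; lia.
  by exists (2 * (h + v) + (j - 2 * h - v)); do 2?case: ifP => ? /=; lia.
- move=> t ltk; have [lt_tp|le_pt] := ltnP t (2 * (h + v)).
    have [odd_t|even_t] := boolP (odd t).
      by exists t.-1; do 4?case: ifP => ? /=; lia.
    by exists t.+1; do 4?case: ifP => ? /=; lia.
  by exists t.-1; do 4?case: ifP => ? /=; lia.
Qed.

Lemma tensor_K2_disconnected : ~ connected_graph (G 2 2).
Proof.
move/(_ (ord0, ord0) (ord0, ord_max)); apply/negP.
have diag_closed : closed (G 2 2) [pred p : 'I_2 * 'I_2 | p.1 == p.2].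
  move=> [a b] [c d]; rewrite /tensor_graph /complete_graph /= -!val_eqE.
  by case: a b c d => [[|[|?]] ?] [[|[|?]] ?] [[|[|?]] ?] [[|[|?]] ?].
by apply/negP => /(closed_connect diag_closed).
Qed.

Lemma pair_counts m n : 3 <= m -> m <= n -> n <= 2 * m - 2 ->
  exists h v p, [/\ 0 < h + v, m.-1 <= h + 2 * v <= m, n.-1 <= 2 * h + v + p <= n &
                    3 * (2 * (h + v) + p) <= 2 * (m + n - 2) + 2].
Proof.
move=> m_ge3 le_mn le_n2m.
(* m + n - 2 = 3q + r: use q pairs, plus a pendant if r = 1 and one more pair if r = 2. *)
have := divn_eq (m + n - 2) 3; have := ltn_pmod (m + n - 2) (isT : 0 < 3).
move: ((m + n - 2) %/ 3) ((m + n - 2) %% 3) => q [|[|[|r]]] // _ def_q.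
- by exists (n.-1 - q), (2 * q - n.-1), 0; split; lia.
- by exists (n.-1 - q - 1), (2 * q + 1 - n.-1), 1; split; lia.
- by exists (n.-1 - q), (2 * q + 1 - n.-1), 0; split; lia.
Qed.

Lemma metric_dim_tensor_clique m n : 3 <= m -> m <= n -> n <= 2 * m - 2 ->
  metric_dim (G m n) = (2 * (m + n - 2) + 2) %/ 3.
Proof.
move=> m_ge3 le_mn le_n2m; apply: metric_dim_eq.
- by rewrite card_prod !card_ord; nia.
- have [h [v [p [hv_gt0 rows cols size_hvp]]]] := pair_counts m_ge3 le_mn le_n2m.
  have [W resW card_W] := pair_layout_resolving hv_gt0 rows cols.
  by exists W; rewrite // (leq_trans card_W) // leq_divRL //; lia.
- move=> W resW.
  have lb_W : 2 * (m + n - 2) <= 3 * #|W| := resolving_card_lb m_ge3 (leq_trans m_ge3 le_mn) resW.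
  by rewrite -ltnS ltn_divLR //; lia.
Qed.

Lemma metric_dim_tensor_clique_wide m n : 2 <= m -> 2 * m - 1 <= n ->
  metric_dim (G m n) = n - 1.
Proof.
move=> m_ge2 le_2mn; apply: metric_dim_eq.
- by rewrite card_prod !card_ord; nia.
- have [W resW card_W] :=
    @pair_layout_resolving m n m.-1 0 (n.+1 - 2 * m) ltac:(lia) ltac:(lia) ltac:(lia).
  by exists W; rewrite // (leq_trans card_W) //; lia.
- move=> W resW.
  have missing_cols : #|~: (snd @: W)| <= 1 := resolving_cols (ltnW m_ge2) resW.
  have card_cols : #|snd @: W| + #|~: (snd @: W)| = n by rewrite cardsC card_ord.
  have : #|snd @: W| <= #|W| := leq_imset_card snd W.
  lia.
Qed.

Theorem theorem1p1 (m n : nat) (hm : 0 < m) (hmn : m <= n) :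
  (m = 2 -> n = 2 ->
     ~ connected_graph (tensor_graph (complete_graph m) (complete_graph n))) /\
  (3 <= m -> n <= 2 * m - 2 ->
     metric_dim (tensor_graph (complete_graph m) (complete_graph n))
       = (2 * (m + n - 2) + 2) %/ 3) /\
  (2 <= m -> 2 * m - 1 <= n ->
     metric_dim (tensor_graph (complete_graph m) (complete_graph n)) = n - 1).
Proof.
split; [by move=> -> ->; exact: tensor_K2_disconnected | split].
- by move=> m_ge3; exact: metric_dim_tensor_clique.
- exact: metric_dim_tensor_clique_wide.
Qed.
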